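(* Let $E=\frac{1}{2(n-1)}\sum_{k=1}^np_k\frac{\partial}{\partial p_k}$, regarded as a vector field on the orbit space $\mathbb{C}^n/B_n$. Then $\mathcal{L}_Eg=(d-1)g$ with $d=1-\frac{2}{n-1}$, where $g$ is the contravariant metric with components $g^{ij}(u)=\sum_{k,l}\frac{1-\delta^{kl}}{p_kp_l}\frac{\partial u_i}{\partial p_k}\frac{\partial u_j}{\partial p_l}$ in the coordinates $u_1,\dots,u_n$.
   Context: $n\ge2$. $B_n$ acts on $\mathbb{C}^n$ (coordinates $p_1,\dots,p_n$) by permutations and sign changes of coordinates. $u_k=\sum_{1\le i_1<\dots<i_k\le n}p_{i_1}^2\cdots p_{i_k}^2$ ($k=1,\dots,n$) are basic invariants serving as coordinates on the orbit space; $g^{ij}(u)$ is a polynomial in $u$. $\mathcal{L}$ denotes the Lie derivative (here of a contravariant symmetric 2-tensor). *)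

From HB Require Import structures.
From mathcomp Require Import all_boot all_order all_algebra.
From mathcomp Require Import mpoly.
Set Implicit Arguments. Unset Strict Implicit. Unset Printing Implicit Defensive.
Import Order.TTheory GRing.Theory Num.Theory.
Local Open Scope ring_scope.

Section B_n_orbit_space.
Variables (n : nat) (R : fieldType).

(* Basic invariant u_{i+1} (index i : 'I_n stands for u_{i+1}):
   u_k = sum_{i_1<...<i_k} p_{i_1}^2 ... p_{i_k}^2, as a polynomial in p. *)
Definition ucoord (i : 'I_n) : {mpoly R[n]} :=
  \sum_(h : {set 'I_n} | #|h| == i.+1) \prod_(k in h) ('X_k) ^+ 2.

Definition uvec (p : 'I_n -> R) : 'I_n -> R := fun i => (ucoord i).@[p].

Definition Ep (f : {mpoly R[n]}) : {mpoly R[n]} :=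
  (2%:R * (n.-1)%:R)^-1 *: \sum_(k < n) ('X_k * mderiv k f).

Definition gexpr (p : 'I_n -> R) (i j : 'I_n) : R :=
  \sum_(k < n) \sum_(l < n)
     (1 - (k == l)%:R) / (p k * p l)
       * (mderiv k (ucoord i)).@[p] * (mderiv l (ucoord j)).@[p].

(* Lie derivative of a contravariant symmetric 2-tensor G along a vector field F,
   both given by polynomial components in the coordinates u:
   (L_F G)^{ij} = F^k d_k G^{ij} - G^{kj} d_k F^i - G^{ik} d_k F^j. *)
Definition lie_deriv2 (F : 'I_n -> {mpoly R[n]}) (G : 'I_n -> 'I_n -> {mpoly R[n]})
  (i j : 'I_n) : {mpoly R[n]} :=
  \sum_(k < n) (F k * mderiv k (G i j) - G k j * mderiv k (F i)
                - G i k * mderiv k (F j)).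

End B_n_orbit_space.

(* The tensors E and g are polynomial in u, and such polynomials are determined
   by their values at u(p) for p with nonzero coordinates: over an algebraically
   closed field every point is a vector of squares p_k^2, so this is the
   uniqueness part of the fundamental theorem on symmetric polynomials.
   Since u_i is homogeneous of degree 2i in p, Euler's identity gives
   E = sum_i i/(n-1) u_i d/du_i.  Scaling p by s scales u_k by s^(2k) and g^ij by
   s^(2(i+j-2)), so g^ij is weighted homogeneous of weight i+j-2 when u_k has
   weight k.  Euler's identity for this weight then gives
   (L_E g)^ij = E(g^ij) - (i + j)/(n-1) g^ij = -2/(n-1) g^ij = (d-1) g^ij. *)

From HB Require Import structures.
From mathcomp Require Import all_boot all_order all_algebra.
From mathcomp Require Import mpoly.
From mathcomp Require Import ring.
Set Implicit Arguments.
Unset Strict Implicit.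
Unset Printing Implicit Defensive.
Import Order.TTheory GRing.Theory Num.Theory.
Local Open Scope ring_scope.

Lemma meval_scale_dhomog (R : comNzRingType) n d (p : {mpoly R[n]}) (s : R) x :
  p \is d.-homog -> p.@[fun k => s * x k] = s ^+ d * p.@[x].
Proof.
move=> /dhomogP hom_p; rewrite !mevalE mulr_sumr !big_seq; apply: eq_bigr => m m_p.
under eq_bigr do rewrite exprMn.
by rewrite big_split /= prodrXr -mdegE hom_p // mulrCA.
Qed.

Lemma dhomog_mderiv (R : nzRingType) n d (p : {mpoly R[n]}) i :
  p \is d.-homog -> p^`M(i) \is d.-1.-homog.
Proof.
move=> /dhomogP hom_p; apply/dhomogP => m; rewrite mcoeff_msupp mcoeff_mderiv.
have [/hom_p /=|] := boolP ((m + U_(i))%MM \in msupp p).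
  by rewrite mdegD mdeg1 addn1 => <-.
by rewrite -mcoeff_eq0 => /eqP->; rewrite mul0rn eqxx.
Qed.

Lemma mulX_mderivX (R : comNzRingType) n i (m : 'X_{1..n}) :
  'X_i * ('X_[m] : {mpoly R[n]})^`M(i) = (m i)%:R *: 'X_[m].
Proof.
rewrite mderivX -scalerAr; have [->|m_i_gt0] := posnP (m i); first by rewrite !scale0r.
congr (_ *: _); rewrite -mpolyXD; congr 'X_[_]; apply/mnmP => j.
rewrite mnmDE mnmBE mnm1E; case: eqP => [<-|_]; last by rewrite subn0.
by rewrite addnC subnK.
Qed.

Lemma mderiv_euler (R : comNzRingType) n (w : 'I_n -> nat) d (p : {mpoly R[n]}) :
  {in msupp p, forall m : 'X_{1..n}, (\sum_i m i * w i)%N = d} ->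
  \sum_i (w i)%:R *: ('X_i * p^`M(i)) = d%:R *: p.
Proof.
move=> wgt_p; rewrite [in RHS](mpolyE p) scaler_sumr.
under eq_bigr do rewrite [in _^`M(_)](mpolyE p) raddf_sum mulr_sumr scaler_sumr.
rewrite exchange_big /= !big_seq; apply: eq_bigr => m m_p.
under eq_bigr do rewrite mderivZ -scalerAr mulX_mderivX !scalerA.
rewrite -scaler_suml scalerA -(wgt_p m m_p) natr_sum mulr_suml.
by congr (_ *: _); apply: eq_bigr => i _; rewrite mulrAC -natrM mulnC.
Qed.

Lemma mderiv_euler_mdeg (R : comNzRingType) n d (p : {mpoly R[n]}) :
  p \is d.-homog -> \sum_i 'X_i * p^`M(i) = d%:R *: p.
Proof.
move=> /dhomogP hom_p; rewrite -(@mderiv_euler _ _ (fun=> 1%N)).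
  by apply: eq_bigr => i _; rewrite scale1r.
by move=> m /hom_p /= <-; rewrite mdegE; apply: eq_bigr => i _; rewrite muln1.
Qed.

Lemma mderiv_euler_mnmwgt (R : comNzRingType) n d (p : {mpoly R[n]}) :
  p \is d.-homog for mnmwgt -> \sum_(i < n) i.+1%:R *: ('X_i * p^`M(i)) = d%:R *: p.
Proof. by move=> /dhomogP; apply: mderiv_euler. Qed.

Lemma poly_eq0_nz_roots (R : numDomainType) (q : {poly R}) :
  (forall t, t != 0 -> q.[t] = 0) -> q = 0.
Proof.
move=> q0; apply: (@roots_geq_poly_eq0 _ q [seq i.+1%:R | i <- iota 0 (size q)]).
- by apply/allP => _ /mapP[i _ ->]; apply/rootP/q0; rewrite pnatr_eq0.
- by rewrite map_inj_uniq ?iota_uniq // => i j /eqP; rewrite eqr_nat => /eqP[].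
- by rewrite size_map size_iota.
Qed.

Lemma ltn_mnm_msize (R : nzRingType) n (p : {mpoly R[n]}) m i :
  m \in msupp p -> (m i < msize p)%N.
Proof.
move=> /msize_mdeg_lt; apply: leq_ltn_trans.
by rewrite mdegE (bigD1 i) //= leq_addr.
Qed.

Section FirstVariable.
Variables (R : comNzRingType) (n : nat).
Implicit Types (p : {mpoly R[n.+1]}) (m : 'X_{1..n.+1}).

Definition mnm_behead m : 'X_{1..n} := [multinom m (lift ord0 i) | i < n].

Definition mcoeff_var0 p (j : nat) : {mpoly R[n]} :=
  \sum_(m <- msupp p | m ord0 == j) p@_m *: 'X_[mnm_behead m].

Definition mcons (t : R) (x : 'I_n -> R) (i : 'I_n.+1) : R :=
  if unlift ord0 i is Some k then x k else t.

Lemma meval_mcons p t x :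
  p.@[mcons t x] = \sum_(j < msize p) (mcoeff_var0 p j).@[x] * t ^+ j.
Proof.
under [RHS]eq_bigr do rewrite raddf_sum /= mulr_suml big_mkcond /=.
rewrite exchange_big mevalE !big_seq /=; apply: eq_bigr => m m_p.
rewrite [RHS](bigD1 (Ordinal (ltn_mnm_msize ord0 m_p))) //= eqxx.
rewrite [X in _ + X]big1 => [|j]; last first.
  by rewrite -(inj_eq val_inj) /= eq_sym => /negbTE->.
rewrite addr0 mevalZ mevalX big_ord_recl /mcons unlift_none -mulrA [t ^+ _ * _]mulrC.
by congr (_ * (_ * _)); apply: eq_bigr => i _; rewrite liftK mnmE.
Qed.

Lemma mcoeff_var0_behead p m : (mcoeff_var0 p (m ord0))@_(mnm_behead m) = p@_m.
Proof.
have eq_mnm m' : (m' ord0 == m ord0) && (mnm_behead m' == mnm_behead m) = (m' == m).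
  apply/andP/eqP => [[/eqP m'0 /eqP /mnmP m'_tail]|-> //]; apply/mnmP => i.
  case: (unliftP ord0 i) => [k ->|->]; rewrite ?m'0 //.
  by rewrite -!(mnmE (fun k => _ (lift _ k))) m'_tail.
rewrite /mcoeff_var0 raddf_sum big_mkcond /= [in RHS](mpolyE p) raddf_sum /=.
apply: eq_bigr => m' _.
rewrite !mcoeffZ !mcoeffX -eq_mnm.
by case: (m' ord0 == m ord0); rewrite ?mulr0.
Qed.

End FirstVariable.

Lemma mpoly_eq0_nz_roots (R : numDomainType) n (p : {mpoly R[n]}) :
  (forall x, (forall i, x i != 0) -> p.@[x] = 0) -> p = 0.
Proof.
elim: n p => [|n IH] p p0.
  rewrite [p]nvar0_mpolyC -[p@_0](@mevalC 0 _ (fun=> 0)) -(nvar0_mpolyC p).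
  by rewrite p0 ?mpolyC0 //; case.
have coeff0 j : (j < msize p)%N -> mcoeff_var0 p j = 0.
  move=> lt_j; apply: IH => x x_nz.
  pose q := \poly_(k < msize p) (mcoeff_var0 p k).@[x].
  suff q0 : q = 0.
    by have := congr1 (fun q : {poly R} => q`_j) q0; rewrite coef_poly lt_j coef0.
  apply: poly_eq0_nz_roots => t t_nz; rewrite horner_poly -meval_mcons p0 // => i.
  by rewrite /mcons; case: unlift.
apply/mpolyP => m; rewrite mcoeff0; have [m_p|/memN_msupp_eq0 //] := boolP (m \in msupp p).
by rewrite -mcoeff_var0_behead coeff0 ?mcoeff0 // ltn_mnm_msize.
Qed.

Definition mnmwgt_scale (R : nzRingType) n (t : R) : n.-tuple {mpoly R[n]} :=
  [tuple t ^+ i.+1 *: 'X_i | i < n].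

Lemma comp_mnmwgt_scaleX (R : comNzRingType) n (t : R) (m : 'X_{1..n}) :
  'X_[m] \mPo mnmwgt_scale n t = t ^+ mnmwgt m *: 'X_[m].
Proof.
rewrite comp_mpolyX; under eq_bigr do rewrite tnth_mktuple exprZn -exprM.
rewrite scaler_prod prodrXr mpolyXE_id; congr (t ^+ _ *: _).
by apply: eq_bigr => i _; rewrite mulnC.
Qed.

Lemma mcoeff_comp_mnmwgt_scale (R : comNzRingType) n (t : R) (p : {mpoly R[n]}) m :
  (p \mPo mnmwgt_scale n t)@_m = t ^+ mnmwgt m * p@_m.
Proof.
rewrite comp_mpolyEX raddf_sum /=.
under eq_bigr do rewrite comp_mnmwgt_scaleX scalerA mcoeffZ mcoeffX.
have [m_p|m_notp] := boolP (m \in msupp p); last first.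
  rewrite (memN_msupp_eq0 m_notp) mulr0 big1_seq // => m' /andP[_ m'_p].
  by case: eqP => [eq_m'|]; rewrite ?mulr0 //; move: m_notp; rewrite -eq_m' m'_p.
rewrite (bigD1_seq m) ?msupp_uniq //= eqxx mulr1 mulrC big1_seq ?addr0 //.
by move=> m' /andP[/negbTE-> _]; rewrite mulr0.
Qed.

Lemma dhomog_mnmwgt_scale (R : numDomainType) n (t : R) d (p : {mpoly R[n]}) :
  0 < t -> t != 1 -> p \mPo mnmwgt_scale n t = t ^+ d *: p ->
  p \is d.-homog for mnmwgt.
Proof.
move=> t_gt0 t_neq1 scale_p; apply/dhomogP => m m_p /=; apply: (ieexprIn t_gt0 t_neq1).
have p_m_neq0 : p@_m != 0 by rewrite -mcoeff_msupp.
apply: (mulIf p_m_neq0).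
by rewrite -mcoeff_comp_mnmwgt_scale scale_p mcoeffZ.
Qed.

Lemma mderivXU (R : nzRingType) n (i k : 'I_n) :
  ('X_i : {mpoly R[n]})^`M(k) = (i == k)%:R.
Proof.
rewrite mderivX mnm1E; case: eqP => [->|_]; last by rewrite scale0r.
have -> : (U_(k) - U_(k))%MM = 0%MM by apply/mnmP => j; rewrite mnmBE subnn mnm0E.
by rewrite mpolyX0 scale1r.
Qed.

Lemma lie_deriv2_diag (R : fieldType) n (F : 'I_n -> {mpoly R[n]}) (c : 'I_n -> R)
    (G : 'I_n -> 'I_n -> {mpoly R[n]}) i j :
  (forall k, F k = c k *: 'X_k) ->
  lie_deriv2 F G i j = \sum_k c k *: ('X_k * (G i j)^`M(k)) - (c i + c j) *: G i j.
Proof.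
have pick_diag (l : 'I_n) (H : 'I_n -> {mpoly R[n]}) :
    \sum_k H k * (c l *: 'X_l)^`M(k) = c l *: H l.
  rewrite (bigD1 l) //= big1 => [|k]; last first.
    by rewrite eq_sym mderivZ mderivXU => /negbTE->; rewrite scaler0 mulr0.
  by rewrite mderivZ mderivXU eqxx addr0 -scalerAr mulr1.
move=> F_diag; rewrite /lie_deriv2 !sumrB (F_diag i) (F_diag j) !pick_diag.
by under eq_bigr do rewrite F_diag -scalerAl; rewrite scalerDl opprD addrA.
Qed.

Lemma ucoord_dhomog (R : fieldType) n (i : 'I_n) : ucoord R i \is (2 * i.+1).-homog.
Proof.
apply: rpred_sum => h /eqP card_h; rewrite -card_h mulnC -sum_nat_const.
elim/big_rec2: _ => [|k d q _ hom_q]; first exact: dhomog1.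
by apply: dhomogM hom_q; rewrite mpolyXn dhomogX /= mdegMn mdeg1.
Qed.

Lemma ucoord_eval (R : fieldType) n (i : 'I_n) (x : 'I_n -> R) :
  (ucoord R i).@[x] = (mesym n R i.+1).@[fun k => x k ^+ 2].
Proof.
rewrite /ucoord /mesym !raddf_sum /=; apply: eq_bigr => h _.
rewrite !(rmorph_prod (meval _)); apply: eq_bigr => k _.
by rewrite (rmorphXn (meval _)) /= !mevalXU.
Qed.

Lemma uvec_scale (R : fieldType) n (s : R) (x : 'I_n -> R) i :
  uvec (fun k => s * x k) i = (s ^+ 2) ^+ i.+1 * uvec x i.
Proof. by rewrite /uvec (meval_scale_dhomog _ _ (ucoord_dhomog R i)) exprM. Qed.

Lemma Ep_ucoord (R : numFieldType) n (i : 'I_n) :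
  Ep (ucoord R i) = (i.+1%:R / (n.-1)%:R) *: ucoord R i.
Proof.
rewrite /Ep (mderiv_euler_mdeg (ucoord_dhomog R i)) scalerA; congr (_ *: _).
by rewrite natrM invfM mulrACA mulVf ?pnatr_eq0 // mul1r mulrC.
Qed.

Lemma gexpr_scale (R : fieldType) n (x : 'I_n -> R) (s : R) (a b : 'I_n) :
  s != 0 -> (forall k, x k != 0) ->
  gexpr (fun k => s * x k) a b = s ^+ (2 * (a + b)) * gexpr x a b.
Proof.
move=> s_neq0 x_neq0; rewrite /gexpr mulr_sumr; apply: eq_bigr => k _.
rewrite mulr_sumr; apply: eq_bigr => l _.
rewrite !(meval_scale_dhomog _ _ (dhomog_mderiv _ (ucoord_dhomog R _))).
rewrite !mulnS /= mulnDr !exprS exprD.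
by field; rewrite s_neq0 x_neq0 x_neq0.
Qed.

Lemma uvec_mpoly_eq0 (R : numClosedFieldType) n (H : {mpoly R[n]}) :
  (forall x, (forall k, x k != 0) -> H.@[uvec x] = 0) -> H = 0.
Proof.
move=> H0; apply: msym_fundamental_un0; apply: mpoly_eq0_nz_roots => y y_neq0.
rewrite comp_mpoly_meval -(H0 (fun k => sqrtC (y k))) => [|k]; last by rewrite sqrtC_eq0.
apply: meval_eq => i; rewrite tnth_mktuple /uvec ucoord_eval.
by apply: meval_eq => k; rewrite sqrtCK.
Qed.

Lemma gexpr_dhomog_mnmwgt (R : numClosedFieldType) n (G : {mpoly R[n]}) (a b : 'I_n) :
  (forall x, (forall k, x k != 0) -> G.@[uvec x] = gexpr x a b) ->
  G \is (a + b)%N.-homog for mnmwgt.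
Proof.
move=> G_gexpr; have two_neq0 : 2%:R != 0 :> R by rewrite pnatr_eq0.
apply: (@dhomog_mnmwgt_scale _ _ (2%:R ^+ 2)); rewrite ?exprn_gt0 ?ltr0n //.
  by rewrite -natrX pnatr_eq1.
apply/subr0_eq/uvec_mpoly_eq0 => x x_neq0; rewrite mevalB mevalZ comp_mpoly_meval.
have -> : G.@[fun i => (tnth (mnmwgt_scale n (2%:R ^+ 2)) i).@[uvec x]]
    = G.@[uvec (fun k => 2%:R * x k)].
  by apply: meval_eq => i; rewrite tnth_mktuple mevalZ mevalXU uvec_scale.
rewrite !G_gexpr ?gexpr_scale // => [|k]; last by rewrite mulf_neq0.
by rewrite -exprM subrr.
Qed.

Theorem mainTheorem18 (R : numClosedFieldType) (n : nat) (hn : (2 <= n)%N)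
  (F : 'I_n -> {mpoly R[n]}) (G : 'I_n -> 'I_n -> {mpoly R[n]}) :
  (forall (i : 'I_n) (p : 'I_n -> R), (F i).@[uvec p] = (Ep (ucoord R i)).@[p]) ->
  (forall (i j : 'I_n) (p : 'I_n -> R), (forall k, p k != 0) ->
     (G i j).@[uvec p] = gexpr p i j) ->
  let d : R := 1 - 2%:R / (n.-1)%:R in
  forall i j : 'I_n, lie_deriv2 F G i j = (d - 1) *: G i j.
Proof.
move=> F_Ep G_gexpr d i j; pose c (k : 'I_n) : R := k.+1%:R / (n.-1)%:R.
have F_diag k : F k = c k *: 'X_k.
  apply/subr0_eq/uvec_mpoly_eq0 => x _.
  by rewrite mevalB mevalZ mevalXU F_Ep Ep_ucoord mevalZ subrr.
have G_wgt := gexpr_dhomog_mnmwgt (G_gexpr i j).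
rewrite (lie_deriv2_diag G i j F_diag).
under eq_bigr do rewrite /c mulrC -scalerA.
rewrite -scaler_sumr (mderiv_euler_mnmwgt G_wgt) scalerA -scalerBl /d /c; congr (_ *: _).
rewrite -!natr1 natrD; ring.
Qed.
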